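(* Let $\mathbb{F}$ be an algebraically closed field and let $A,A^*$ be a pair of $2\times2$ matrices over $\mathbb{F}$, each tridiagonal with both diagonal entries $0$ and nonzero off-diagonal entries, which is a Leonard pair in $\mathrm{Mat}_2(\mathbb{F})$. Then there exist nonzero $\xi,\xi^*\in\mathbb{F}$, a nonzero $s\in\mathbb{F}$ with $s^2\neq1$, and an invertible diagonal matrix $D\in\mathrm{Mat}_2(\mathbb{F})$ such that $D^{-1}(\xi A)D=\begin{pmatrix}0&1\\1&0\end{pmatrix}$ and $D^{-1}(\xi^*A^* )D=\begin{pmatrix}0&s^{-1}\\ s&0\end{pmatrix}$.
   Context: A Leonard pair in $\mathrm{Mat}_{d+1}(\mathbb{F})$ is a pair of matrices $A,A^*$ such that there is a basis of $\mathbb{F}^{d+1}$ in which $A$ is irreducible tridiagonal (tridiagonal with all sub/superdiagonal entries nonzero) and $A^*$ is diagonal, and a basis in which $A^*$ is irreducible tridiagonal and $A$ is diagonal. (In the paper's terminology, the conclusion says that after replacing $A,A^*$ by nonzero scalar multiples, the pair is equivalent, via conjugation by an invertible diagonal matrix, to the Leonard pair $\begin{pmatrix}0&1\\1&0\end{pmatrix},\begin{pmatrix}0&s^{-1}\\ s&0\end{pmatrix}$ with $s\ne0$, $s^2\ne1$.) *)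

From HB Require Import structures.
From mathcomp Require Import all_boot all_order all_algebra.
Set Implicit Arguments. Unset Strict Implicit. Unset Printing Implicit Defensive.
Import GRing.Theory.
Local Open Scope ring_scope.

Definition irred_tridiag (F : fieldType) (n : nat) (B : 'M[F]_n) : Prop :=
  (forall i j : 'I_n, (i.+1 < j)%N \/ (j.+1 < i)%N -> B i j = 0) /\
  (forall i j : 'I_n, (i.+1 == j) || (j.+1 == i) -> B i j != 0).

Definition is_diag (F : fieldType) (n : nat) (B : 'M[F]_n) : Prop :=
  is_diag_mx B.

(* The matrix of X in the basis given by the columns of P is
   P^-1 X P. *)
Definition leonard_pair (F : fieldType) (d : nat) (A As : 'M[F]_d.+1) : Prop :=
  (exists P : 'M[F]_d.+1, P \in unitmx /\
     irred_tridiag (invmx P *m A *m P) /\ is_diag (invmx P *m As *m P)) /\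
  (exists Q : 'M[F]_d.+1, Q \in unitmx /\
     irred_tridiag (invmx Q *m As *m Q) /\ is_diag (invmx Q *m A *m Q)).

Definition mx2 (F : fieldType) (a b c d : F) : 'M[F]_2 :=
  \matrix_(i < 2, j < 2)
    (if i == 0 :> nat then (if j == 0 :> nat then a else b)
     else (if j == 0 :> nat then c else d)).

From HB Require Import structures.
From mathcomp Require Import all_boot all_order all_algebra.
From mathcomp Require Import ring.
Set Implicit Arguments.
Unset Strict Implicit.
Unset Printing Implicit Defensive.

Import GRing.Theory.
Local Open Scope ring_scope.

(* Scaling A = [[0, a], [b, 0]] by a square root xi of 1/(ab) makes the
   product of its off-diagonal entries 1, and conjugating by D = diag(1, xi b)
   turns it into [[0, 1], [1, 0]].  With xis a square root of 1/(as bs), the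
   same D turns xis As = xis [[0, as], [bs, 0]] into
   [[0, 1/s], [s, 0]] with s^2 = (a bs) / (as b).  If s^2 = 1 then As is a
   scalar multiple of A, and then no basis can make As diagonal while A is
   irreducible tridiagonal (unless As = 0, which is not tridiagonal). *)

Lemma closed_field_nth_root (F : closedFieldType) (n : nat) (c : F) :
  (0 < n)%N -> exists x : F, x ^+ n = c.
Proof.
move=> n_gt0; have /closed_rootP [x] : size ('X^n - c%:P) != 1%N.
  by rewrite size_XnsubC // -(prednK n_gt0).
by rewrite rootE !hornerE subr_eq0 => /eqP; exists x.
Qed.

Lemma leonard_pair_scale_free (F : fieldType) (d : nat) (A As : 'M[F]_d.+2)
    (c : F) :
  leonard_pair A As -> As != c *: A.
Proof.
move=> [[P [_ [[_ triA] diagAs]]] [Q [_ [[_ triAs] _]]]].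
apply/eqP=> AsE; pose i0 : 'I_d.+2 := ord0.
pose i1 : 'I_d.+2 := Ordinal (isT : 1 < d.+2)%N.
have c0 : c = 0.
  have /is_diag_mxP /(_ i0 i1 isT) := diagAs.
  rewrite AsE -scalemxAr -scalemxAl mxE => /eqP.
  by rewrite mulf_eq0 (negbTE (triA i0 i1 isT)) orbF => /eqP.
by have := triAs i0 i1 isT; rewrite AsE c0 scale0r mulmx0 mul0mx mxE eqxx.
Qed.

Section Mx2.

Variable F : fieldType.

Lemma mul_mx2 (a b c d a' b' c' d' : F) :
  mx2 a b c d *m mx2 a' b' c' d'
  = mx2 (a * a' + b * c') (a * b' + b * d') (c * a' + d * c') (c * b' + d * d').
Proof.
apply/matrixP=> i j; rewrite !mxE !big_ord_recl big_ord0 !mxE addr0.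
by case: i => [[|[|i]] ?] //; case: j => [[|[|j]] ?].
Qed.

Lemma scale_mx2 (x a b c d : F) :
  x *: mx2 a b c d = mx2 (x * a) (x * b) (x * c) (x * d).
Proof.
apply/matrixP=> i j; rewrite !mxE.
by case: i => [[|[|i]] ?] //; case: j => [[|[|j]] ?].
Qed.

Lemma mx2_is_diag (a d : F) : is_diag_mx (mx2 a 0 0 d).
Proof.
apply/is_diag_mxP=> i j; rewrite !mxE.
by case: i => [[|[|i]] ?] //; case: j => [[|[|j]] ?].
Qed.

Lemma diag_mx2_unit (t : F) : t != 0 -> mx2 1 0 0 t \in unitmx.
Proof.
move=> t0; suff /mulmx1_unit[] : mx2 1 0 0 t *m mx2 1 0 0 t^-1 = 1%:M by [].
apply/matrixP=> i j; rewrite mul_mx2 !mxE mulfV //.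
by case: i => [[|[|i]] ?] //; case: j => [[|[|j]] ?] //=;
  rewrite ?(mulr0, mul0r, addr0, add0r, mulr1, mul1r).
Qed.

Lemma conj_antidiag_mx2 (b c t : F) : t != 0 ->
  invmx (mx2 1 0 0 t) *m mx2 0 b c 0 *m mx2 1 0 0 t = mx2 0 (b * t) (c / t) 0.
Proof.
move=> t0; rewrite -mulmxA -[RHS](mulKmx (diag_mx2_unit t0)); congr (_ *m _).
rewrite !mul_mx2.
by congr mx2; rewrite ?(mulr0, mul0r, addr0, add0r, mulr1, mul1r) // mulrC divfK.
Qed.

End Mx2.

Theorem proposition4p3 (F : closedFieldType) (a b as_ bs : F) :
  a != 0 -> b != 0 -> as_ != 0 -> bs != 0 ->
  leonard_pair (d := 1) (mx2 0 a b 0) (mx2 0 as_ bs 0) ->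
  exists (xi xis s : F) (D : 'M[F]_2),
    xi != 0 /\ xis != 0 /\ s != 0 /\ s ^+ 2 != 1 /\
    D \in unitmx /\ is_diag_mx D /\
    invmx D *m (xi *: mx2 0 a b 0) *m D = mx2 0 1 1 0 /\
    invmx D *m (xis *: mx2 0 as_ bs 0) *m D = mx2 0 s^-1 s 0.
Proof.
move=> a0 b0 as0 bs0 LP.
have [xi xiE] := closed_field_nth_root (a * b)^-1 (isT : 0 < 2)%N.
have [xis xisE] := closed_field_nth_root (as_ * bs)^-1 (isT : 0 < 2)%N.
have xi0 : xi != 0.
  by apply: contraNneq (mulf_neq0 a0 b0) => xi0; rewrite -invr_eq0 -xiE xi0 expr0n.
have xis0 : xis != 0.
  by apply: contraNneq (mulf_neq0 as0 bs0) => xis0; rewrite -invr_eq0 -xisE xis0 expr0n.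
pose t := xi * b; have t0 : t != 0 by rewrite mulf_neq0.
pose s := xis * bs / t; have s0 : s != 0 by rewrite !mulf_neq0 ?invr_eq0.
have s2E : s ^+ 2 = (a * bs) / (as_ * b).
  by rewrite expr_div_n !exprMn xiE xisE; field; rewrite a0 b0 as0 bs0.
exists xi, xis, s, (mx2 1 0 0 t); do !split => //.
- apply: contraNneq (leonard_pair_scale_free (as_ / a) LP) => s2_1.
  apply/eqP; rewrite scale_mx2 !mulr0 divfK //; congr mx2.
  move: s2_1; rewrite s2E => /(canRL (divfK _)); rewrite mul1r mulf_neq0 // => cross.
  by apply: (mulfI a0); rewrite cross; field.
- exact: diag_mx2_unit.
- exact: mx2_is_diag.
- rewrite scale_mx2 !mulr0 conj_antidiag_mx2 //; congr mx2; last exact: mulfV.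
  by rewrite -(mulVf (mulf_neq0 a0 b0)) -xiE /t; ring.
- rewrite scale_mx2 !mulr0 conj_antidiag_mx2 //; congr mx2.
  apply: (mulIf s0); rewrite mulVf // -(mulVf (mulf_neq0 as0 bs0)) -xisE /s /t.
  by field; rewrite b0 xi0.
Qed.
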